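(* Let $(\mathcal{H},L)$ have the uniform convergence property with respect to $\mathcal{D}$, with uniform convergence function $f$, let $\varepsilon>0$, $\alpha>0$, and assume $\Pr[\widehat{\Theta}_S^\varepsilon\neq\varnothing]>0$. (i) If the risk minimizer $\theta_0\in\arg\min_\Theta R$ exists, then $(\mathcal{H},L)$ is valid at level $\alpha$ and tolerance $\varepsilon$ whenever $m\ge f(\varepsilon/2,\alpha)$. (ii) If the risk minimizer does not exist, then $(\mathcal{H},L)$ is valid at level $\alpha$ and tolerance $\varepsilon$ whenever $m\ge\inf_{0<\delta<\varepsilon}f((\varepsilon-\delta)/2,\alpha)$.
   Context: Setting: data are i.i.d. from a distribution $\mathcal{D}$ on $\mathcal{X}\times\mathcal{Y}$; $\mathcal{H}=\{x\mapsto h(x;\theta)\mid\theta\in\Theta\}$ with $\Theta$ a topological space, $L:\mathcal{Y}\times\mathcal{Y}\to\mathbb{R}$ a loss; risk $R(\theta)=\mathbb{E}_{\mathcal{D}}[L(h(X;\theta),Y)]$ (finite), empirical risk $\widehat{R}_S(\theta)=\frac1m\sum_{i=1}^mL(h(X_i;\theta),Y_i)$ for $S\sim\mathcal{D}^m$. All events are assumed measurable. Uniform convergence property: there is $w:\mathbb{R}^+\times\mathbb{R}^+\to\mathbb{R}$ (a ''witness'') such that for all $\varepsilon,\alpha>0$ and integers $m\ge w(\varepsilon,\alpha)$, $\Pr_{S\sim\mathcal{D}^m}[\sup_{\theta}|R(\theta)-\widehat{R}_S(\theta)|\le\varepsilon]\ge1-\alpha$; the uniform convergence function is $f(\varepsilon,\alpha)=\inf_{w}\lceil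 w(\varepsilon,\alpha)\rceil$ over all witnesses $w$. $\widehat{\Theta}_S^\varepsilon=\{\theta\mid\widehat{R}_S(\theta)\le\inf_\vartheta\widehat{R}_S(\vartheta)+\varepsilon\}$, $\Theta_0^\delta=\{\theta\mid R(\theta)\le\inf_\vartheta R(\vartheta)+\delta\}$. The $\varepsilon$-plausibility of a Borel set $A\subseteq\Theta$ is $\mathrm{pl}_\varepsilon(A)=\Pr_{S\sim\mathcal{D}^m}[\widehat{\Theta}_S^\varepsilon\cap A\ne\varnothing\mid\widehat{\Theta}_S^\varepsilon\ne\varnothing]$. Validity: at a fixed sample size $m$, $(\mathcal{H},L)$ is valid at level $\alpha$ and tolerance $\varepsilon$ if for every Borel set $A\subseteq\Theta$ for which there exists $\delta\ge0$ with $\Theta_0^\delta\subseteq A$ and $\Theta_0^\delta\neq\varnothing$, one has $\mathrm{pl}_\varepsilon(A)\ge1-\alpha$. *)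

From mathcomp Require Import all_boot all_order all_algebra.
From mathcomp Require Import all_classical all_reals all_analysis.
Import Order.TTheory GRing.Theory Num.Theory.

Set Implicit Arguments.
Unset Strict Implicit.
Unset Printing Implicit Defensive.

Local Open Scope classical_set_scope.
Local Open Scope ring_scope.

(* Setting: data z = (x, y) in X * Y drawn from D; hypothesis h : X -> Theta -> Y
   (h x theta = h(x; theta)); loss L : Y -> Y -> R. *)

Definition lossAt (X Y Th : Type) (R : realType)
  (h : X -> Th -> Y) (L : Y -> Y -> R) (th : Th) (z : X * Y) : R :=
  L (h z.1 th) z.2.

(* Risk R(theta) = E_D[L(h(X;theta),Y)] (real-valued; finiteness is a hypothesis). *)
Definition risk (dX dY : measure_display) (X : measurableType dX)
  (Y : measurableType dY) (Th : Type) (R : realType)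
  (D : probability (X * Y)%type R) (h : X -> Th -> Y) (L : Y -> Y -> R)
  (th : Th) : R :=
  Rintegral D setT (lossAt h L th).

Definition emp_risk (X Y Th : Type) (R : realType) (m : nat)
  (h : X -> Th -> Y) (L : Y -> Y -> R) (S : m.-tuple (X * Y)) (th : Th) : R :=
  (m%:R)^-1 * \sum_(i < m) lossAt h L th (tnth S i).

Definition emp_argmin (X Y Th : Type) (R : realType) (m : nat)
  (h : X -> Th -> Y) (L : Y -> Y -> R) (S : m.-tuple (X * Y)) (eps : R)
  : set Th :=
  [set th | ((emp_risk h L S th)%:E <=
             ereal_inf (range (fun t => (emp_risk h L S t)%:E)) + eps%:E)%E].

Definition risk_argmin (Th : Type) (R : realType) (Rk : Th -> R) (d : R)
  : set Th :=
  [set th | ((Rk th)%:E <= ereal_inf (range (fun t => (Rk t)%:E)) + d%:E)%E].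

Definition unif_dev (X Y Th : Type) (R : realType) (m : nat)
  (h : X -> Th -> Y) (L : Y -> Y -> R) (Rk : Th -> R) (S : m.-tuple (X * Y))
  : \bar R :=
  ereal_sup (range (fun th => (`|Rk th - emp_risk h L S th|)%:E)).

(* P m is (a version of) the product probability D^m on samples of size m:
   it agrees with prod_i D(A_i) on all measurable rectangles (which
   determines it uniquely on the product sigma-algebra). *)
Definition is_product_prob (dX dY : measure_display) (X : measurableType dX)
  (Y : measurableType dY) (R : realType) (D : probability (X * Y)%type R)
  (m : nat) (Pm : probability (m.-tuple (X * Y)%type) R) : Prop :=
  forall A : 'I_m -> set (X * Y),
    (forall i, measurable (A i)) ->
    Pm [set S | forall i, A i (tnth S i)] = (\prod_(i < m) D (A i))%E.

Definition Pr (d : measure_display) (T : measurableType d) (R : realType)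
  (P : probability T R) (E : set T) : R := fine (P E).

Definition uc_witness (dX dY : measure_display) (X : measurableType dX)
  (Y : measurableType dY) (Th : Type) (R : realType)
  (P : forall m : nat, probability (m.-tuple (X * Y)%type) R)
  (h : X -> Th -> Y) (L : Y -> Y -> R) (Rk : Th -> R) (w : R -> R -> R) : Prop :=
  forall eps alpha : R, 0 < eps -> 0 < alpha ->
  forall m : nat, (0 < m)%N -> w eps alpha <= m%:R ->
    1 - alpha <= Pr (P m) [set S | (unif_dev h L Rk S <= eps%:E)%E].

Definition uniform_convergence (dX dY : measure_display) (X : measurableType dX)
  (Y : measurableType dY) (Th : Type) (R : realType)
  (P : forall m : nat, probability (m.-tuple (X * Y)%type) R)
  (h : X -> Th -> Y) (L : Y -> Y -> R) (Rk : Th -> R) : Prop :=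
  exists w, uc_witness P h L Rk w.

Definition uc_function (dX dY : measure_display) (X : measurableType dX)
  (Y : measurableType dY) (Th : Type) (R : realType)
  (P : forall m : nat, probability (m.-tuple (X * Y)%type) R)
  (h : X -> Th -> Y) (L : Y -> Y -> R) (Rk : Th -> R) (eps alpha : R) : \bar R :=
  ereal_inf [set ((Num.ceil (w eps alpha))%:~R)%:E
            | w in [set w | uc_witness P h L Rk w]].

Definition Borel (Th : topologicalType) (A : set Th) : Prop :=
  <<s (@open Th) >> A.

Definition plausibility (dX dY : measure_display) (X : measurableType dX)
  (Y : measurableType dY) (Th : Type) (R : realType) (m : nat)
  (Pm : probability (m.-tuple (X * Y)%type) R)
  (h : X -> Th -> Y) (L : Y -> Y -> R) (eps : R) (A : set Th) : R :=
  Pr Pm [set S | emp_argmin h L S eps `&` A !=set0 /\ emp_argmin h L S eps !=set0]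
  / Pr Pm [set S | emp_argmin h L S eps !=set0].

Definition valid (dX dY : measure_display) (X : measurableType dX)
  (Y : measurableType dY) (Th : topologicalType) (R : realType) (m : nat)
  (Pm : probability (m.-tuple (X * Y)%type) R)
  (h : X -> Th -> Y) (L : Y -> Y -> R) (Rk : Th -> R) (alpha eps : R) : Prop :=
  forall A : set Th, Borel A ->
    (exists d : R, 0 <= d /\ risk_argmin Rk d `<=` A /\ risk_argmin Rk d !=set0) ->
    1 - alpha <= plausibility Pm h L eps A.

(* "All events are assumed measurable": the events used in the statement. *)
Definition events_measurable (dX dY : measure_display) (X : measurableType dX)
  (Y : measurableType dY) (Th : topologicalType) (R : realType)
  (h : X -> Th -> Y) (L : Y -> Y -> R) (Rk : Th -> R) : Prop :=
  forall (m : nat) (eps : R),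
    measurable [set S : m.-tuple (X * Y)%type | (unif_dev h L Rk S <= eps%:E)%E] /\
    measurable [set S : m.-tuple (X * Y)%type | emp_argmin h L S eps !=set0] /\
    (forall A : set Th, Borel A ->
      measurable [set S : m.-tuple (X * Y)%type |
                   emp_argmin h L S eps `&` A !=set0 /\ emp_argmin h L S eps !=set0]).

From mathcomp Require Import all_boot all_order all_algebra.
From mathcomp Require Import all_classical all_reals all_analysis.
From mathcomp Require Import lra.
Import Order.TTheory GRing.Theory Num.Theory.

Set Implicit Arguments.
Unset Strict Implicit.
Unset Printing Implicit Defensive.

Local Open Scope classical_set_scope.
Local Open Scope ring_scope.

(* Call [th] a [d]-near minimiser of the risk when R(th) <= R(t) + d for all t.
   The deterministic heart of the argument: on a sample S whose uniform
   deviation sup_t |R(t) - R_S(t)| is at most e, every d-near minimiser lies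
   in the empirical eps-argmin as soon as 2e + d <= eps.  Hence, if every
   admissible set A (one containing a nonempty Theta_0^delta) contains a
   d-near minimiser, the event {dev <= e} is included in the event
   {hat Theta_S^eps meets A}, and the plausibility of A is at least
   Pr[dev <= e] >= 1 - alpha, the last bound coming from any uniform
   convergence witness below the sample size.
   (i)  An exact risk minimiser is a 0-near minimiser lying in every
        Theta_0^delta; take e = eps/2.
   (ii) Otherwise, for each d in (0, eps) a nonempty Theta_0^delta always
        contains a d-near minimiser; take e = (eps - d)/2 for a d realising
        the infimum over d up to one unit of sample size. *)

Definition near_minimizer (Th : Type) (R : realType) (Rk : Th -> R) (d : R)
  (th : Th) : Prop :=
  forall t, Rk th <= Rk t + d.

Section NearMinimizers.
Variables (Th : Type) (R : realType) (Rk : Th -> R).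

Local Notation inf_Rk := (ereal_inf (range (fun t => (Rk t)%:E))).

Lemma inf_Rk_le t : (inf_Rk <= (Rk t)%:E)%E.
Proof. by apply: ereal_inf_lbound; exists t. Qed.

Lemma near_minimizer_risk_argmin d delta th :
  near_minimizer Rk d th -> d <= delta -> risk_argmin Rk delta th.
Proof.
move=> near le_d; rewrite /risk_argmin /=.
have lb : ((Rk th - d)%:E <= inf_Rk)%E.
  by apply/ereal_infP => _ [t _ <-]; rewrite lee_fin lerBlDr.
have d_le : (d%:E <= delta%:E)%E by rewrite lee_fin.
by apply: le_trans (leeD lb d_le); rewrite -EFinD subrK.
Qed.

(* A nonempty Theta_0^delta contains a [d]-near minimiser for every d > 0:
   if delta <= d any of its points works, otherwise take a point whose
   risk is within d of the infimum. *)
Lemma risk_argmin_near_minimizer delta d :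
  0 < d -> risk_argmin Rk delta !=set0 ->
  exists2 th, risk_argmin Rk delta th & near_minimizer Rk d th.
Proof.
move=> d0 [th1 th1_in]; move: (th1_in); rewrite /risk_argmin /=.
have := inf_Rk_le th1.
case inf_eq : inf_Rk => [r| |] //= r_le; rewrite -EFinD !lee_fin in r_le *.
have r_lb t : r <= Rk t by rewrite -lee_fin -inf_eq inf_Rk_le.
move=> th1_le; have [delta_le|d_lt] := leP delta d.
  by exists th1 => // t; have := r_lb t; lra.
have [t t_lt] : exists t, Rk t < r + d.
  apply/not_existsP => no_t.
  suff : ((r + d)%:E <= inf_Rk)%E by rewrite inf_eq lee_fin; lra.
  by apply/ereal_infP => _ [t _ <-]; rewrite lee_fin leNgt; apply/negP/no_t.
exists t; first by rewrite /risk_argmin /= lee_fin; lra.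
by move=> t'; have := r_lb t'; lra.
Qed.

End NearMinimizers.

Lemma near_minimizer_emp_argmin (X Y Th : Type) (R : realType) (m : nat)
  (h : X -> Th -> Y) (L : Y -> Y -> R) (Rk : Th -> R) (S : m.-tuple (X * Y))
  (th : Th) (e d eps : R) :
  near_minimizer Rk d th -> (unif_dev h L Rk S <= e%:E)%E ->
  2 * e + d <= eps -> emp_argmin h L S eps th.
Proof.
move=> near dev_le ed_le.
have dev_t t : `|Rk t - emp_risk h L S t| <= e.
  rewrite -lee_fin; apply: le_trans dev_le.
  by apply: ereal_sup_ubound; exists t.
rewrite /emp_argmin /=.
rewrite -[emp_risk _ _ _ _](subrK eps) EFinD leeD2r //.
apply/ereal_infP => _ [t _ <-]; rewrite lee_fin.
have := dev_t th; have := dev_t t; have := near t.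
rewrite !ler_norml => ? /andP[? ?] /andP[? ?]; lra.
Qed.

Lemma Pr_le_conditional (d : measure_display) (T : measurableType d)
  (R : realType) (Pm : probability T R) (G E N : set T) :
  measurable G -> measurable E -> measurable N -> G `<=` E ->
  0 < Pr Pm N -> Pr Pm G <= Pr Pm E / Pr Pm N.
Proof.
move=> mG mE mN GE N_gt0.
have PrGE : Pr Pm G <= Pr Pm E.
  by apply: fine_le; rewrite ?fin_num_measure //; apply: le_measure; rewrite ?inE.
have PrN_le1 : Pr Pm N <= 1.
  by rewrite -[1]/(fine 1%E); apply: fine_le; rewrite ?fin_num_measure ?probability_le1.
have PrE_ge0 : 0 <= Pr Pm E by apply/fine_ge0/measure_ge0.
apply: (le_trans PrGE); rewrite ler_pdivlMr //; rewrite -[leRHS]mulr1.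
exact: ler_wpM2l.
Qed.

Section Validity.
Variables (dX dY : measure_display) (X : measurableType dX)
  (Y : measurableType dY) (Th : topologicalType) (R : realType)
  (P : forall m : nat, probability (m.-tuple (X * Y)%type) R)
  (h : X -> Th -> Y) (L : Y -> Y -> R) (Rk : Th -> R).

(* If the uniform convergence function at (e, alpha) is below m + 1, some
   witness is below m, so the deviation event has probability >= 1 - alpha. *)
Lemma uc_function_deviation_bound e alpha (m : nat) :
  0 < e -> 0 < alpha -> (0 < m)%N ->
  (uc_function P h L Rk e alpha < (m%:R + 1)%:E)%E ->
  1 - alpha <= Pr (P m) [set S | (unif_dev h L Rk S <= e%:E)%E].
Proof.
move=> e0 alpha0 m0; case/ereal_inf_lt => _ [w w_uc <-]; rewrite lte_fin => w_lt.
apply: (w_uc _ _ e0 alpha0 m m0); apply: le_trans (Num.Theory.ceil_ge _) _.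
have : Num.ceil (w e alpha) < m%:Z + 1.
  by rewrite -(ltr_int R) intrD.
by rewrite ltzD1 -(ler_int R).
Qed.

Lemma valid_of_near_minimizers (m : nat) (alpha eps e d : R) :
  events_measurable h L Rk -> 2 * e + d <= eps ->
  1 - alpha <= Pr (P m) [set S | (unif_dev h L Rk S <= e%:E)%E] ->
  0 < Pr (P m) [set S | emp_argmin h L S eps !=set0] ->
  (forall A : set Th, Borel A ->
     (exists delta : R, 0 <= delta /\ risk_argmin Rk delta `<=` A /\
                        risk_argmin Rk delta !=set0) ->
     exists2 th, A th & near_minimizer Rk d th) ->
  valid (P m) h L Rk alpha eps.
Proof.
move=> meas ed_le dev_likely N_gt0 near_in A A_borel A_adm.
have [th A_th near] := near_in A A_borel A_adm.
have [mG _] := meas m e; have [_ [mN mE]] := meas m eps.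
apply: (le_trans dev_likely); apply: (Pr_le_conditional mG (mE A A_borel) mN) => // S dev_le.
have th_in := near_minimizer_emp_argmin near dev_le ed_le.
by split; exists th.
Qed.

End Validity.

Theorem mainTheorem4
  (dX dY : measure_display) (X : measurableType dX) (Y : measurableType dY)
  (Th : topologicalType) (R : realType)
  (D : probability (X * Y)%type R)
  (P : forall m : nat, probability (m.-tuple (X * Y)%type) R)
  (h : X -> Th -> Y) (L : Y -> Y -> R)
  (hP : forall m : nat, is_product_prob D (P m))
  (hint : forall th : Th, D.-integrable setT (fun z => (lossAt h L th z)%:E))
  (hmeas : events_measurable h L (risk D h L))
  (huc : uniform_convergence P h L (risk D h L))
  (eps alpha : R) (heps : 0 < eps) (halpha : 0 < alpha) :
  ((exists th0 : Th, forall th : Th, risk D h L th0 <= risk D h L th) ->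
     forall m : nat, (0 < m)%N ->
     (uc_function P h L (risk D h L) (eps / 2) alpha <= (m%:R)%:E)%E ->
     0 < Pr (P m) [set S | emp_argmin h L S eps !=set0] ->
     valid (P m) h L (risk D h L) alpha eps)
  /\
  (~ (exists th0 : Th, forall th : Th, risk D h L th0 <= risk D h L th) ->
     forall m : nat, (0 < m)%N ->
     (ereal_inf [set uc_function P h L (risk D h L) ((eps - d) / 2) alpha
                | d in [set d : R | (0 < d < eps)%R] ] <= (m%:R)%:E)%E ->
     0 < Pr (P m) [set S | emp_argmin h L S eps !=set0] ->
     valid (P m) h L (risk D h L) alpha eps).
Proof.
set Rk := risk D h L.
have below_succ (m : nat) (x : \bar R) : (x <= (m%:R)%:E)%E -> (x < (m%:R + 1)%:E)%E.
  by move=> x_le; apply: le_lt_trans x_le _; rewrite lte_fin ltrDl.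
split.
- move=> [th0 th0_min] m m0 f_le N_gt0.
  have near0 : near_minimizer Rk 0 th0 by move=> t; rewrite addr0.
  apply: (valid_of_near_minimizers (e := eps / 2) (d := 0)) => //.
  + by rewrite addr0 mulrC divfK ?pnatr_eq0.
  + by apply: uc_function_deviation_bound; rewrite ?divr_gt0 ?below_succ.
  + move=> A _ [delta [delta0 [sub _]]]; exists th0 => //.
    exact/sub/(near_minimizer_risk_argmin near0).
- move=> _ m m0 /below_succ /ereal_inf_lt[_ [d /andP[d0 d_lt] <-]] f_lt N_gt0.
  apply: (valid_of_near_minimizers (e := (eps - d) / 2) (d := d)) => //.
  + by rewrite mulrC divfK ?pnatr_eq0 // subrK.
  + by apply: uc_function_deviation_bound; rewrite ?divr_gt0 ?subr_gt0.
  + move=> A _ [delta [_ [sub nonempty]]].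
    have [th th_in near] := risk_argmin_near_minimizer d0 nonempty.
    by exists th => //; apply: sub.
Qed.
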